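(* Let $(E,\mu)$ and $(F,\nu)$ be fuzzy Riesz spaces and $T:E\rightarrow F$ a fuzzy Riesz homomorphism. If $I_z$ is the fuzzy principal ideal in $E$ generated by an element $z\in E^+$, then $T(I_z)$ is the fuzzy principal ideal in $T(E)$ generated by $Tz$.
   Context: A fuzzy order on a real vector space $E$ is a map $\mu:E\times E\to[0,1]$ with $\mu(x,x)=1$; $\mu(x,y)+\mu(y,x)>1$ implies $x=y$; and $\mu(x,z)\ge\sup_{y}\min(\mu(x,y),\mu(y,z))$. Write $x\le y$ for $\mu(x,y)>\frac12$; suprema/infima are taken with respect to this relation. $(E,\mu)$ is a fuzzy ordered linear space if $\mu(x_1,x_2)>\frac12$ implies $\mu(x_1,x_2)\le\mu(x_1+x,x_2+x)$ for all $x$ and $\mu(x_1,x_2)\le\mu(\alpha x_1,\alpha x_2)$ for all $\alpha>0$; it is a fuzzy Riesz space if $x\vee y=\sup\{x,y\}$ and $x\wedge y=\inf\{x,y\}$ exist for all $x,y$. $E^+=\{x: \mu(0,x)>\frac12\}$, $|x|=x\vee(-x)$. A fuzzy Riesz homomorphism is a linear map with $T(x\vee y)=Tx\vee Ty$; $T(E)$ is a fuzzy Riesz subspace of $F$ regarded as a fuzzy Riesz space with the restricted order. A fuzzy ideal is a vector subspace $A$ such that $\mu(|x|,|y|)>\frac12$ and $y\in A$ imply $x\in A$. The fuzzy principal ideal generated by $x$ is the smallest fuzzy ideal containing $x$. *)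

From HB Require Import structures.
From mathcomp Require Import all_boot all_order all_algebra.
From mathcomp Require Import classical_sets reals.
Set Implicit Arguments. Unset Strict Implicit. Unset Printing Implicit Defensive.
Import Order.TTheory GRing.Theory Num.Theory.
Local Open Scope ring_scope.
Local Open Scope classical_set_scope.

Section Fuzzy.
Variables (R : realType) (E : lmodType R).
Implicit Types (mu : E -> E -> R) (S A : set E).

(* fuzzy order: values in [0,1]; mu(x,z) >= sup_y min(mu(x,y),mu(y,z))
   is written out as a bound for every y *)
Definition fuzzy_order mu : Prop :=
  [/\ forall x y, 0 <= mu x y <= 1,
      forall x, mu x x = 1,
      forall x y, 1 < mu x y + mu y x -> x = y &
      forall x y z, Num.min (mu x y) (mu y z) <= mu x z].

Definition fle mu (x y : E) : Prop := 2^-1 < mu x y.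

Definition is_sup_in S mu (x y s : E) : Prop :=
  [/\ S s, fle mu x s, fle mu y s &
      forall u, S u -> fle mu x u -> fle mu y u -> fle mu s u].
Definition is_inf_in S mu (x y s : E) : Prop :=
  [/\ S s, fle mu s x, fle mu s y &
      forall u, S u -> fle mu u x -> fle mu u y -> fle mu u s].

Definition fuzzy_ordered_linear_space mu : Prop :=
  fuzzy_order mu /\
  (forall x1 x2, fle mu x1 x2 ->
     (forall x, mu x1 x2 <= mu (x1 + x) (x2 + x)) /\
     (forall a : R, 0 < a -> mu x1 x2 <= mu (a *: x1) (a *: x2))).

Definition fuzzy_riesz_space mu : Prop :=
  fuzzy_ordered_linear_space mu /\
  forall x y, (exists s, is_sup_in setT mu x y s) /\
              (exists i, is_inf_in setT mu x y i).

Definition positive_cone mu : set E := [set x | fle mu 0 x].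

Definition is_abs_in S mu (x a : E) : Prop := is_sup_in S mu x (- x) a.

Definition vsubspace A : Prop :=
  A 0 /\ forall (c : R) x y, A x -> A y -> A (c *: x + y).

Definition fuzzy_ideal_in S mu A : Prop :=
  [/\ A `<=` S, vsubspace A &
      forall x y a b, S x -> S y -> is_abs_in S mu x a -> is_abs_in S mu y b ->
        fle mu a b -> A y -> A x].

Definition fuzzy_principal_ideal_in S mu (z : E) A : Prop :=
  [/\ fuzzy_ideal_in S mu A, A z &
      forall B, fuzzy_ideal_in S mu B -> B z -> A `<=` B].

End Fuzzy.

Definition fuzzy_riesz_hom (R : realType) (E F : lmodType R)
  (mu : E -> E -> R) (nu : F -> F -> R) (T : {linear E -> F}) : Prop :=
  forall x y s, is_sup_in setT mu x y s -> is_sup_in setT nu (T x) (T y) (T s).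

(** A Riesz homomorphism T preserves the order, absolute values and every
    lattice expression, so the preimage under T of an ideal of T(E) is an ideal
    of E; applied to an ideal B of T(E) containing Tz this gives I_z ⊆ T⁻¹(B),
    i.e. minimality of T(I_z). For solidity of T(I_z), let |Tu| ≤ |Tv| with
    v ∈ I_z, and truncate u to u' = (u ∧ |v|) ∨ (-|v|). Then |u'| ≤ |v|, so
    u' ∈ I_z, while Tu' = (Tu ∧ T|v|) ∨ (-T|v|) = Tu because
    -T|v| ≤ Tu ≤ T|v|. *)
From mathcomp Require Import all_boot all_order all_algebra.
From mathcomp Require Import classical_sets reals.
From mathcomp Require Import lra.
Set Implicit Arguments. Unset Strict Implicit. Unset Printing Implicit Defensive.
Import Order.TTheory GRing.Theory Num.Theory.
Local Open Scope ring_scope.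
Local Open Scope classical_set_scope.

Section FuzzyOrderedSpace.
Variables (R : realType) (V : lmodType R) (mu : V -> V -> R).
Hypothesis Hmu : fuzzy_ordered_linear_space mu.

Lemma fle_refl x : fle mu x x.
Proof. by case: Hmu => [[_ mu_refl _ _] _]; rewrite /fle mu_refl; lra. Qed.

Lemma fle_trans x y z : fle mu x y -> fle mu y z -> fle mu x z.
Proof.
case: Hmu => [[_ _ _ mu_trans] _] lexy leyz.
by apply: lt_le_trans (mu_trans x y z); rewrite lt_min lexy leyz.
Qed.

Lemma fle_anti x y : fle mu x y -> fle mu y x -> x = y.
Proof. by case: Hmu => [[_ _ mu_anti _] _]; rewrite /fle => lexy leyx; apply: mu_anti; lra. Qed.

Lemma fle_add2r c x y : fle mu x y -> fle mu (x + c) (y + c).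
Proof. by case: Hmu => _ mu_lin lexy; apply: lt_le_trans lexy ((mu_lin _ _ lexy).1 c). Qed.

Lemma fle_opp x y : fle mu x y -> fle mu (- y) (- x).
Proof.
move=> /(fle_add2r (- x - y)).
by rewrite addrA subrr add0r addrC subrK.
Qed.

Lemma fle_oppl x y : fle mu (- x) y -> fle mu (- y) x.
Proof. by move/fle_opp; rewrite opprK. Qed.

Lemma is_sup_in_unique S x y s s' :
  is_sup_in S mu x y s -> is_sup_in S mu x y s' -> s = s'.
Proof. by move=> [Ss lexs leys s_min] [Ss' lexs' leys' s'_min]; apply: fle_anti; auto. Qed.

Lemma is_sup_in_idl S x y s : S x -> fle mu y x -> is_sup_in S mu x y s -> s = x.
Proof. by move=> Sx leyx /is_sup_in_unique; apply; split => //; apply: fle_refl. Qed.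

Lemma is_sup_in_setT S x y s : S s -> is_sup_in setT mu x y s -> is_sup_in S mu x y s.
Proof. by move=> Ss [_ lexs leys s_min]; split => // u _; apply: s_min. Qed.

Lemma is_abs_in_le S x a b : is_abs_in S mu x a -> fle mu a b ->
  fle mu x b /\ fle mu (- x) b.
Proof. by case=> _ lexa lenxa _ leab; split; apply: fle_trans leab. Qed.

Lemma is_abs_in_opp_le S x a : is_abs_in S mu x a -> fle mu (- a) a.
Proof. by case=> _ lexa lenxa _; apply: fle_trans (fle_oppl lenxa) lexa. Qed.

Lemma is_abs_in_setT_least x a b : is_abs_in setT mu x a ->
  fle mu x b -> fle mu (- x) b -> fle mu a b.
Proof. by case=> _ _ _ a_min; apply: a_min. Qed.

(* [is_clamp u b c] means c = (u ∧ b) ∨ (-b), the meet being written as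
   u ∧ b = -((-u) ∨ (-b)) so that only suprema are involved. *)
Definition is_clamp (u b c : V) : Prop :=
  exists w, is_sup_in setT mu (- u) (- b) w /\ is_sup_in setT mu (- w) (- b) c.

Lemma is_clamp_bounded u b c : fle mu (- b) b -> is_clamp u b c ->
  fle mu c b /\ fle mu (- c) b.
Proof.
move=> lenbb [w [[_ _ lenbw _] [_ _ lenbc c_min]]].
by split; [apply: c_min => //; apply: fle_oppl | apply: fle_oppl].
Qed.

Lemma is_clamp_id u b c : fle mu u b -> fle mu (- b) u -> is_clamp u b c -> c = u.
Proof.
move=> leub lenbu [w [w_sup c_sup]].
have w_eq : w = - u := is_sup_in_idl I (fle_opp leub) w_sup.
by move: c_sup; rewrite w_eq opprK; apply: is_sup_in_idl.
Qed.

End FuzzyOrderedSpace.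

Lemma fuzzy_riesz_clamp (R : realType) (V : lmodType R) (mu : V -> V -> R) u b :
  fuzzy_riesz_space mu -> exists c, is_clamp mu u b c.
Proof.
case=> _ lattice; have [[w w_sup] _] := lattice (- u) (- b).
by have [[c c_sup] _] := lattice (- w) (- b); exists c, w.
Qed.

Section LinearImage.
Variables (R : realType) (E F : lmodType R) (T : {linear E -> F}).

Lemma vsubspace_image A : vsubspace A -> vsubspace (T @` A).
Proof.
case=> A0 A_lin; split; first by exists 0; rewrite ?linear0.
move=> c _ _ [x Ax <-] [y Ay <-].
by exists (c *: x + y); [apply: A_lin | rewrite linearD linearZ].
Qed.

Lemma vsubspace_preimage B : vsubspace B -> vsubspace (T @^-1` B).
Proof.
case=> B0 B_lin; split => [|c x y]; first by rewrite /= linear0.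
by rewrite /= linearD linearZ; apply: B_lin.
Qed.

End LinearImage.

Section RieszHomomorphism.
Variables (R : realType) (E F : lmodType R).
Variables (mu : E -> E -> R) (nu : F -> F -> R) (T : {linear E -> F}).
Hypotheses (Hmu : fuzzy_ordered_linear_space mu) (Hnu : fuzzy_ordered_linear_space nu).
Hypothesis homT : fuzzy_riesz_hom mu nu T.

Lemma fle_riesz_hom x y : fle mu x y -> fle nu (T x) (T y).
Proof.
move=> lexy; have y_sup : is_sup_in setT mu x y y by split => //; apply: fle_refl.
by case: (homT y_sup).
Qed.

Lemma is_abs_riesz_hom x a :
  is_abs_in setT mu x a -> is_abs_in (range T) nu (T x) (T a).
Proof.
by move=> /homT; rewrite linearN; apply: is_sup_in_setT; exists a.
Qed.

Lemma is_clamp_riesz_hom u b c : is_clamp mu u b c -> is_clamp nu (T u) (T b) (T c).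
Proof.
by case=> w [/homT w_sup /homT c_sup]; exists (T w); rewrite -!linearN.
Qed.

Lemma fuzzy_ideal_preimage B :
  fuzzy_ideal_in (range T) nu B -> fuzzy_ideal_in setT mu (T @^-1` B).
Proof.
case=> _ B_sub B_solid; split => //; first exact: vsubspace_preimage.
move=> x y a b _ _ x_abs y_abs leab By.
apply: (B_solid (T x) (T y) (T a) (T b)) By.
- by exists x.
- by exists y.
- exact: is_abs_riesz_hom.
- exact: is_abs_riesz_hom.
- exact: fle_riesz_hom.
Qed.

Lemma fuzzy_ideal_image I : fuzzy_riesz_space mu ->
  fuzzy_ideal_in setT mu I -> fuzzy_ideal_in (range T) nu (T @` I).
Proof.
move=> rieszE [_ I_vsub I_solid].
split; [by move=> _ [x _ <-]; exists x | exact: vsubspace_image |].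
move=> _ y a b [u _ <-] _ Tu_abs Tv_abs leab [v Iv Tv_eq]; subst y.
have [[au u_abs] _] := rieszE.2 u (- u).
have [[av v_abs] _] := rieszE.2 v (- v).
have a_eq : a = T au := is_sup_in_unique Hnu Tu_abs (is_abs_riesz_hom u_abs).
have b_eq : b = T av := is_sup_in_unique Hnu Tv_abs (is_abs_riesz_hom v_abs).
rewrite {}a_eq {}b_eq in leab.
have [c u_clamp] := fuzzy_riesz_clamp u av rieszE.
have [lecav lencav] := is_clamp_bounded Hmu (is_abs_in_opp_le Hmu v_abs) u_clamp.
exists c.
- have [[ac c_abs] _] := rieszE.2 c (- c).
  by apply: (I_solid c v ac av) => //; apply: is_abs_in_setT_least c_abs lecav lencav.
- have [leTuTav lenTuTav] := is_abs_in_le Hnu (is_abs_riesz_hom u_abs) leab.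
  exact: (is_clamp_id Hnu leTuTav (fle_oppl Hnu lenTuTav) (is_clamp_riesz_hom u_clamp)).
Qed.

End RieszHomomorphism.

Theorem theorem2p6 (R : realType) (E F : lmodType R)
  (mu : E -> E -> R) (nu : F -> F -> R) (T : {linear E -> F}) (z : E)
  (I : set E) :
  fuzzy_riesz_space mu -> fuzzy_riesz_space nu ->
  fuzzy_riesz_hom mu nu T ->
  positive_cone mu z ->
  fuzzy_principal_ideal_in setT mu z I ->
  fuzzy_principal_ideal_in (range T) nu (T z) (T @` I).
Proof.
move=> rieszE [Hnu _] homT _ [I_ideal Iz I_min].
split; [exact: (fuzzy_ideal_image rieszE.1 Hnu homT rieszE I_ideal) | by exists z |].
move=> B B_ideal Bz _ [x Ix <-].
suff I_sub : I `<=` T @^-1` B by apply: I_sub.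
by apply: I_min => //; exact: (fuzzy_ideal_preimage rieszE.1 homT B_ideal).
Qed.
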